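(* Let $k\ge2$. The graph $H_k$ has order $n=5k$, minimum degree $\delta(H_k)=2$, $\gamma_2(H_k)=\frac{3n}{5}$, and $\operatorname{ZIR}(H_k)=\frac{2n}{5}=n-\gamma_2(H_k)$. Furthermore, $\operatorname{Z}(H_k)=k+2$.
   Context: $H_k$ consists of $k$ disjoint 5-cycles, the $i$th with vertices $v_{i,1},\dots,v_{i,5}$ in cyclic order, together with edges $v_{i,3}v_{i+1,1}$ for $1\le i\le k-1$ and the edge $v_{k,3}v_{1,1}$. A 2-dominating set is a set $D$ such that every vertex not in $D$ has at least two neighbors in $D$; $\gamma_2$ is its minimum size. Zero forcing: a blue vertex $u$ changes a white vertex $w$ to blue if $w$ is the only white neighbor of $u$; $\operatorname{Z}(G)$ is the minimum size of a set of initially blue vertices from which all vertices eventually become blue. A nonempty $F\subseteq V(G)$ is a fort if every $v\notin F$ has $|N(v)\cap F|\ne1$. A private fort of $x\in S$ relative to $S$ is a fort $F$ with $S\cap F=\{x\}$; $S$ is a ZIr-set if every element of $S$ has a private fort. $\operatorname{ZIR}(G)$ is the maximum cardinality of an inclusion-maximal ZIr-set. *)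

(* Graphs are symmetric relations on a finType. *)
From mathcomp Require Import all_boot.
Set Implicit Arguments. Unset Strict Implicit. Unset Printing Implicit Defensive.

Section Graph.
Variables (T : finType) (adj : rel T).

Definition nbhd (v : T) : {set T} := [set u | adj v u].

Definition min_degree : nat := \big[minn/#|T|]_(v : T) #|nbhd v|.

Definition two_dominating (D : {set T}) : bool :=
  [forall v, (v \notin D) ==> (2 <= #|nbhd v :&: D|)].
Definition gamma2 : nat :=
  \big[minn/#|T|]_(D : {set T} | two_dominating D) #|D|.

Definition force_step (B B' : {set T}) : bool :=
  [exists u, exists w, [&& u \in B, w \notin B,
     nbhd u :&: ~: B == [set w] & B' == w |: B]].
Definition zero_forcing_set (S : {set T}) : bool :=
  connect force_step S [set: T].
Definition Zf : nat :=
  \big[minn/#|T|]_(S : {set T} | zero_forcing_set S) #|S|.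

Definition fort (F : {set T}) : bool :=
  (F != set0) && [forall v, (v \notin F) ==> (#|nbhd v :&: F| != 1)].
Definition private_fort (S : {set T}) (x : T) (F : {set T}) : bool :=
  fort F && (S :&: F == [set x]).
Definition ZIr_set (S : {set T}) : bool :=
  [forall x in S, exists F, private_fort S x F].
Definition ZIR : nat :=
  \max_(S : {set T} | maxset ZIr_set S) #|S|.
End Graph.

(* H_k: vertex (i, j) : 'I_k * 'I_5 stands for v_{i+1, j+1}. *)
Notation H_vertex k := ((ordinal k) * (ordinal 5))%type.
Definition H_edge_dir (k : nat) (x y : H_vertex k) : bool :=
  ((x.1 == y.1) && (val y.2 == (val x.2).+1 %% 5))
  || [&& val x.2 == 2, val y.2 == 0 & val y.1 == (val x.1).+1 %% k].
Definition H_adj (k : nat) : rel (H_vertex k) :=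
  fun x y => H_edge_dir x y || H_edge_dir y x.

(* The number of neighbours in a set F
   of a vertex in row i depends only on row i of F and on the links (i-1, 2) and
   (i+1, 0), so forts and 2-dominating sets are the sets all of whose rows pass a
   test on 5-bit words.  Enumerating words shows that a 2-dominating set has at
   least three vertices in each row (positions 0, 2, 4 of every row suffice) and
   that a ZIr-set has at most four vertices in two consecutive rows, while
   positions 1, 3 of every row form a ZIr-set, hence a maximal one.
   A zero forcing set meets every fort.  Positions 1, 3, 4 of a row form a fort,
   so a set of at most k + 1 vertices either misses one of these forts or has one
   vertex in every row except at most one row with two; a fort avoiding it is then
   assembled row by row.  Conversely, positions 0, 1, 4 of row 0 and position 1 of
   every other row force the whole graph, row after row. *)

From mathcomp Require Import all_boot zify.
Set Implicit Arguments. Unset Strict Implicit. Unset Printing Implicit Defensive.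

Lemma geq_bigmin (I : finType) (P : pred I) (f : I -> nat) c d :
  c <= d -> (forall i, P i -> c <= f i) -> c <= \big[minn/d]_(i | P i) f i.
Proof.
move=> le_cd le_cf; elim/big_ind: _ => // m n le_cm le_cn.
by rewrite leq_min le_cm le_cn.
Qed.

Lemma bigmin_leq (I : finType) (P : pred I) (f : I -> nat) d i :
  P i -> \big[minn/d]_(j | P j) f j <= f i.
Proof.
move=> Pi; have : i \in index_enum I by rewrite mem_index_enum.
elim: (index_enum I) => [|j r IHr] //; rewrite inE big_cons => /orP[/eqP <-|/IHr].
  by rewrite Pi geq_minl.
by case: (P j) => // le_r; rewrite geq_min le_r orbT.
Qed.

Lemma pair_le3_of_small_sum (I : finType) (c : I -> nat) i j :
  (forall l, 0 < c l) -> \sum_l c l <= #|I|.+1 -> i != j -> c i + c j <= 3.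
Proof.
move=> c_gt0 sum_c ij.
have excess : \sum_l c l = \sum_l (c l - 1) + #|I|.
  rewrite -sum1_card -big_split; apply: eq_bigr => l _.
  by change (c l = c l - 1 + 1); have := c_gt0 l; lia.
have pair : (c i - 1) + (c j - 1) <= \sum_l (c l - 1).
  by rewrite (bigD1 i) //= (bigD1 j) 1?eq_sym //= addnA leq_addr.
have := c_gt0 i; have := c_gt0 j; lia.
Qed.

Section ZeroForcing.
Variables (T : finType) (adj : rel T).
Implicit Types (B F S : {set T}) (u w : T).

Lemma force_step_card1 B u w : u \in B -> w \notin B -> adj u w ->
  #|nbhd adj u :&: ~: B| = 1 -> force_step adj B (w |: B).
Proof.
move=> Bu Bw uw /eqP/cards1P[z Ez]; apply/existsP; exists u; apply/existsP; exists w.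
have : w \in nbhd adj u :&: ~: B by rewrite !inE uw.
by rewrite Ez inE => /eqP wz; rewrite Bu Bw wz !eqxx.
Qed.

(* If B misses F, a vertex forcing into F lies outside F and has exactly one
   neighbour in F. *)
Lemma force_step_avoids_fort F B B' : fort adj F -> force_step adj B B' ->
  B :&: F = set0 -> B' :&: F = set0.
Proof.
case/andP=> _ /forallP fortF /existsP[u /existsP[w /and4P[Bu Bw /eqP Nu /eqP ->]]] BF0.
have notF v : v \in B -> v \in F = false.
  by move=> Bv; apply/negP => Fv; have := in_set0 v; rewrite -BF0 inE Bv Fv.
rewrite setIUl BF0 setU0; apply/setP => v; rewrite !inE.
case: eqP => [-> {v}|//]; apply/negP => Fw.
have := fortF u; rewrite notF //= => /negP; apply; apply/cards1P; exists w.
apply/setP => v; rewrite !inE; apply/andP/eqP => [[uv Fv]|->].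
  have : v \in nbhd adj u :&: ~: B.
    by rewrite !inE uv /=; apply: contraT; rewrite negbK => /notF; rewrite Fv.
  by rewrite Nu inE => /eqP.
by have := set11 w; rewrite -Nu !inE => /andP[->].
Qed.

Lemma zero_forcing_set_meets_fort S F :
  zero_forcing_set adj S -> fort adj F -> S :&: F != set0.
Proof.
move=> /connectP[p path_p lastT] fortF; apply/eqP => SF0.
suff : last S p :&: F = set0 by rewrite -lastT setTI => F0; rewrite /fort F0 eqxx in fortF.
elim: p S path_p SF0 {lastT} => [|B p IHp] S //= /andP[SB path_p] SF0.
exact: IHp path_p (force_step_avoids_fort fortF SB SF0).
Qed.
End ZeroForcing.

Lemma eq_ord_pred n (i j : 'I_n) : (j == ord_pred i) = (i == ordS j).
Proof. by rewrite -(can2_eq (@ordSK n) (@ord_predK n)) eq_sym. Qed.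

Lemma val_ord_pred n (i : 'I_n) : 0 < i -> ord_pred i = i.-1 :> nat.
Proof.
move=> i_gt0; have lt_in := ltn_ord i.
by rewrite /= -subn1 -addnBAC // modnDr modn_small ?subn1 //; lia.
Qed.

Definition o0 : 'I_5 := @Ordinal 5 0 isT.
Definition o1 : 'I_5 := @Ordinal 5 1 isT.
Definition o2 : 'I_5 := @Ordinal 5 2 isT.
Definition o3 : 'I_5 := @Ordinal 5 3 isT.
Definition o4 : 'I_5 := @Ordinal 5 4 isT.

Section Neighbourhoods.
Variable k : nat.
Notation V := (H_vertex k).
Implicit Types (x y : V) (F : {set V}).

Definition H_nbrs x : seq V :=
  [:: (x.1, ordS x.2), (x.1, ord_pred x.2)
    & (if x.2 == o2 then [:: (ordS x.1, o0)] else [::])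
      ++ (if x.2 == o0 then [:: (ord_pred x.1, o2)] else [::])].

Lemma H_edge_dirE x y :
  H_edge_dir x y = (y == (x.1, ordS x.2)) || (x.2 == o2) && (y == (ordS x.1, o0)).
Proof.
case: x y => [i a] [j b]; rewrite /H_edge_dir !xpair_eqE /= eq_sym.
by rewrite -!(inj_eq val_inj) /= [_ && (_ == 0)]andbC.
Qed.

Lemma mem_H_nbrs x y : y \in H_nbrs x =
  [|| y == (x.1, ordS x.2), y == (x.1, ord_pred x.2),
      (x.2 == o2) && (y == (ordS x.1, o0)) | (x.2 == o0) && (y == (ord_pred x.1, o2))].
Proof. by rewrite /H_nbrs !inE mem_cat; do 2!case: ifP; rewrite ?inE ?orbF. Qed.

Lemma H_adjE x y : H_adj x y = (y \in H_nbrs x).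
Proof.
case: x y => [i a] [j b].
have back_step : ((i, a) == (j, ordS b)) = ((j, b) == (i, ord_pred a)).
  by rewrite !xpair_eqE eq_sym !eq_ord_pred eq_sym.
have back_link : (b == o2) && ((i, a) == (ordS j, o0))
               = (a == o0) && ((j, b) == (ord_pred i, o2)).
  rewrite !xpair_eqE eq_ord_pred.
  by case: (b == o2); case: (a == o0); rewrite ?andbT ?andbF.
rewrite /H_adj !H_edge_dirE /= back_step back_link mem_H_nbrs -!orbA.
by congr (_ || _); rewrite orbCA.
Qed.

Lemma uniq_H_nbrs x : uniq (H_nbrs x).
Proof.
by case: x => i [[|[|[|[|[|j]]]]] lt_j5] //=; rewrite !inE !xpair_eqE ?eqxx ?andbF.
Qed.

Lemma card_nbhdI_H F x : #|nbhd (@H_adj k) x :&: F| = count (mem F) (H_nbrs x).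
Proof.
rewrite -size_filter -(card_uniqP (filter_uniq _ (uniq_H_nbrs x))).
by apply: eq_card => y; rewrite !inE mem_filter H_adjE andbC.
Qed.
End Neighbourhoods.

Lemma all_iota_ord n (P : pred nat) : all P (iota 0 n) = [forall j : 'I_n, P j].
Proof.
apply/allP/forallP => [P_iota j | P_ord m]; first by apply: P_iota; rewrite mem_iota ltn_ord.
by rewrite mem_iota => /andP[_ lt_mn]; apply: (P_ord (Ordinal lt_mn)).
Qed.

(* A row is read as the word of its five memberships; [prev] and [next] record
   whether the neighbours (i-1, 2) of (i, 0) and (i+1, 0) of (i, 2) lie in the set.
   The index arithmetic is that of [ordS] and [ord_pred] on 'I_5, definitionally. *)
Definition row_nbr_count (s : seq bool) (prev next : bool) (j : nat) : nat :=
  nth false s (j.+1 %% 5) + nth false s ((j + 5).-1 %% 5)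
  + ((j == 2) && next) + ((j == 0) && prev).

(* Quantifying over [iota 0 5] rather than ['I_5] keeps the word predicates
   computable by [vm_compute]. *)
Definition row_fort s prev next :=
  all (fun j => ~~ nth false s j ==> (row_nbr_count s prev next j != 1)) (iota 0 5).
Definition row_two_dom s prev next :=
  all (fun j => ~~ nth false s j ==> (2 <= row_nbr_count s prev next j)) (iota 0 5).

Definition word_024 := [:: true; false; true; false; true].
Definition word_13 := [:: false; true; false; true; false].
Definition word_124 := [:: false; true; true; false; true].
Definition word_023 := [:: true; false; true; true; false].
Definition word_134 := [:: false; true; false; true; true].
Definition word_014 := [:: true; true; false; false; true].
Definition word_1 := [:: false; true; false; false; false].
Definition word_full := [:: true; true; true; true; true].

Fixpoint bitseqs n : seq (seq bool) :=
  if n is n'.+1 then [seq b :: s | b <- [:: true; false], s <- bitseqs n'] else [:: [::]].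

Lemma bitseqsP n s : size s = n -> s \in bitseqs n.
Proof.
elim: n s => [|n IHn] [|b s] //= [/IHn s_n].
by rewrite !mem_cat; case: b; rewrite (map_f _ s_n) ?orbT.
Qed.

Lemma all_bitseqsP n (P : pred (seq bool)) : all P (bitseqs n) -> forall s, size s = n -> P s.
Proof. by move/allP=> P_n s /bitseqsP/P_n. Qed.

Lemma row_two_dom_count s prev next : size s = 5 -> row_two_dom s prev next -> 3 <= count id s.
Proof. by move: prev next; case: s => [|[] [|[] [|[] [|[] [|[] []]]]]] //= [] []. Qed.

(* [p] stands for rows m and m+1 of a fort: the links between the two rows are
   read off [p], the outer ones are arbitrary. *)
Definition two_row_fort p := has (fun prev => has (fun next =>
  row_fort (take 5 p) prev (nth false p 5) && row_fort (drop 5 p) (nth false p 2) next)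
  [:: false; true]) [:: false; true].

Lemma dense_two_rows_no_private_fort t : size t = 10 -> 4 < count id t ->
  exists2 x, nth false t x &
    forall p, size p = 10 -> two_row_fort p -> nth false p x ->
      exists y, [&& y < 10, y != x, nth false p y & nth false t y].
Proof.
(* [forts] is bound once so that it is computed once, not for every [t]. *)
move: t; have : let forts := filter two_row_fort (bitseqs 10) in
  all (fun t => (count id t <= 4) || has (fun x => nth false t x && all (fun p =>
      nth false p x ==> has (fun y => (y != x) && nth false p y && nth false t y) (iota 0 10))
    forts) (iota 0 10)) (bitseqs 10).
  by vm_compute.
move=> /all_bitseqsP checked t size_t dense; have := checked t size_t.
rewrite leqNgt dense => /hasP[x _ /andP[tx forts_x]]; exists x => // p size_p fort_p px.
have /allP/(_ p) := forts_x; rewrite mem_filter fort_p bitseqsP // px => /(_ isT).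
case/hasP=> y; rewrite mem_iota => /andP[_ y10] /andP[/andP[yx py] ty].
by exists y; rewrite y10 yx py ty.
Qed.

Definition meets_134 (t : seq bool) := [|| nth false t 1, nth false t 3 | nth false t 4].
Definition disjoint_words p t := ~~ has (fun j => nth false p j && nth false t j) (iota 0 5).

Lemma complement_row_fort t : size t = 5 -> count id t = 1 -> meets_134 t ->
  [/\ nth false (map negb t) 0, nth false (map negb t) 2
    & forall prev next, row_fort (map negb t) prev next].
Proof. by case: t => [|[] [|[] [|[] [|[] [|[] []]]]]]. Qed.

Definition avoiding_fort_word t p :=
  [&& size p == 5, has id p, disjoint_words p t & row_fort p true true].
Definition pair_fort_word t := head [::] (filter (avoiding_fort_word t) (bitseqs 5)).

Lemma pair_fort_wordP t : size t = 5 -> count id t = 2 -> meets_134 t ->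
  avoiding_fort_word t (pair_fort_word t).
Proof. by case: t => [|[] [|[] [|[] [|[] [|[] []]]]]]. Qed.

Section Rows.
Variable k : nat.
Notation V := (H_vertex k).
Implicit Types (F : {set V}) (i : 'I_k).

Definition row F i : seq bool := [seq (i, j) \in F | j <- enum 'I_5].
Definition prev_link F i := (ord_pred i, o2) \in F.
Definition next_link F i := (ordS i, o0) \in F.

Lemma size_row F i : size (row F i) = 5.
Proof. by rewrite size_map size_enum_ord. Qed.

Lemma nth_row F i (j : 'I_5) : nth false (row F i) j = ((i, j) \in F).
Proof. by rewrite (nth_map j) ?size_enum_ord // nth_ord_enum. Qed.

Lemma card_rows F : #|F| = \sum_i count id (row F i).
Proof.
rewrite -sum1_card big_mkcond /=.
rewrite (eq_bigr (fun x : V => if (x.1, x.2) \in F then 1 else 0)); last by case.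
rewrite -(pair_bigA _ (fun i j => if (i, j) \in F then 1 else 0)) /=; apply: eq_bigr => i _.
by rewrite /row count_map -sum1_count big_enum_cond /= [RHS]big_mkcond.
Qed.

Lemma card_nbhd_row F i (j : 'I_5) :
  #|nbhd (@H_adj k) (i, j) :&: F| = row_nbr_count (row F i) (prev_link F i) (next_link F i) j.
Proof.
rewrite card_nbhdI_H /H_nbrs /= count_cat /row_nbr_count.
rewrite -[_.+1 %% 5]/(val (ordS j)) -[(_ + 5).-1 %% 5]/(val (ord_pred j)) !nth_row.
rewrite -[val j == 2]/(j == o2) -[val j == 0]/(j == o0) /prev_link /next_link.
by case: (j == o2); case: (j == o0); rewrite /= ?addn0 ?addnA.
Qed.

Lemma forall_vertices_rows (P : nat -> bool) F :
  [forall v, (v \notin F) ==> P #|nbhd (@H_adj k) v :&: F|] =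
  [forall i, all (fun j => ~~ nth false (row F i) j ==>
                   P (row_nbr_count (row F i) (prev_link F i) (next_link F i) j)) (iota 0 5)].
Proof.
apply/forallP/forallP => [PF i | PF [i j]].
  by rewrite all_iota_ord; apply/forallP => j; rewrite nth_row -card_nbhd_row; apply: PF.
by have := PF i; rewrite all_iota_ord => /forallP/(_ j); rewrite nth_row -card_nbhd_row.
Qed.

Lemma fort_rowsE F : fort (@H_adj k) F =
  (F != set0) && [forall i, row_fort (row F i) (prev_link F i) (next_link F i)].
Proof. by rewrite /fort (forall_vertices_rows (fun c => c != 1)). Qed.

Lemma two_dominating_rowsE F : two_dominating (@H_adj k) F =
  [forall i, row_two_dom (row F i) (prev_link F i) (next_link F i)].
Proof. by rewrite /two_dominating (forall_vertices_rows (leq 2)). Qed.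

Definition rows_set (P : 'I_k -> seq bool) : {set V} := [set x : V | nth false (P x.1) x.2].

Lemma row_rows_set P i : size (P i) = 5 -> row (rows_set P) i = P i.
Proof.
move=> size_P; apply: (@eq_from_nth _ false) => [|j]; rewrite size_row ?size_P // => lt_j5.
by rewrite -[j]/(val (Ordinal lt_j5)) nth_row inE.
Qed.

Lemma prev_link_rows_set P i : prev_link (rows_set P) i = nth false (P (ord_pred i)) 2.
Proof. by rewrite /prev_link inE. Qed.

Lemma next_link_rows_set P i : next_link (rows_set P) i = nth false (P (ordS i)) 0.
Proof. by rewrite /next_link inE. Qed.

Lemma card_rows_set P : (forall i, size (P i) = 5) -> #|rows_set P| = \sum_i count id (P i).
Proof. by move=> size_P; rewrite card_rows; apply: eq_bigr => i _; rewrite row_rows_set. Qed.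
End Rows.

Section Invariants.
Variable k : nat.
Notation V := (H_vertex k).
Implicit Types (D : {set V}) (i : 'I_k).

Lemma card_H_vertex : #|{: V}| = 5 * k.
Proof. by rewrite card_prod !card_ord mulnC. Qed.

Lemma card_nbhd_H (x : V) : #|nbhd (@H_adj k) x| = size (H_nbrs x).
Proof.
rewrite -(setIT (nbhd _ x)) card_nbhdI_H -[RHS]count_predT.
by apply: eq_count => y; rewrite /= inE.
Qed.

Lemma min_degree_H : 0 < k -> min_degree (@H_adj k) = 2.
Proof.
move=> k_gt0; apply/eqP; rewrite eqn_leq; apply/andP; split.
  apply: (@leq_trans #|nbhd (@H_adj k) (Ordinal k_gt0, o1)|); first exact: bigmin_leq.
  by rewrite card_nbhd_H.
apply: geq_bigmin => [|x _]; first by rewrite card_H_vertex; lia.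
by rewrite card_nbhd_H.
Qed.

Lemma two_dominating_card D : two_dominating (@H_adj k) D -> 3 * k <= #|D|.
Proof.
rewrite two_dominating_rowsE card_rows => /forallP dom_D.
have -> : 3 * k = \sum_(i < k) 3 by rewrite sum_nat_const card_ord mulnC.
by apply: leq_sum => i _; apply: row_two_dom_count (dom_D i); rewrite size_row.
Qed.

Lemma gamma2_H : gamma2 (@H_adj k) = 3 * k.
Proof.
apply/eqP; rewrite eqn_leq; apply/andP; split; last first.
  apply: geq_bigmin => [|D]; last exact: two_dominating_card.
  by rewrite card_H_vertex leq_mul2r orbT.
have dom024 : two_dominating (@H_adj k) (rows_set (fun _ : 'I_k => word_024)).
  by rewrite two_dominating_rowsE; apply/forallP => i;
    rewrite row_rows_set // prev_link_rows_set next_link_rows_set.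
have card024 : #|rows_set (fun _ : 'I_k => word_024)| = 3 * k.
  by rewrite card_rows_set // sum_nat_const card_ord mulnC.
by rewrite -card024; apply: bigmin_leq dom024.
Qed.
End Invariants.

Section AtLeastTwoRows.
Variable k : nat.
Hypothesis k_gt1 : 1 < k.
Notation V := (H_vertex k).
Implicit Types (F S : {set V}) (i m : 'I_k).

Lemma ordS_neq m : ordS m != m.
Proof.
rewrite -(inj_eq val_inj) /=; case: m => m /= lt_mk.
have [lt_m1k | gt_m1k | eq_m1k] := ltngtP m.+1 k.
- by rewrite modn_small // gtn_eqF.
- lia.
- by rewrite eq_m1k modnn eq_sym -lt0n -ltnS eq_m1k.
Qed.

Definition two_row_vertex m (y : nat) : V :=
  if y < 5 then (m, inord y) else (ordS m, inord (y - 5)).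

Lemma nth_two_rows F m y : y < 10 ->
  nth false (row F m ++ row F (ordS m)) y = (two_row_vertex m y \in F).
Proof.
move=> y10; rewrite nth_cat size_row /two_row_vertex; case: ifP => y5.
  by rewrite -[y in nth _ _ y](@inordK 4 y) // nth_row.
by rewrite -[X in nth _ _ X](@inordK 4 (y - 5)) ?nth_row //; lia.
Qed.

Lemma two_row_vertex_inj m y y' : y < 10 -> y' < 10 ->
  two_row_vertex m y = two_row_vertex m y' -> y = y'.
Proof.
have := ordS_neq m; rewrite /two_row_vertex => Sm y10 y'10.
case: ifP => y5; case: ifP => y'5 /eqP; rewrite xpair_eqE.
all: move=> /andP[/eqP Em /eqP/(f_equal (@nat_of_ord 5))]; rewrite ?inordK; try lia.
all: by [rewrite Em eqxx in Sm | rewrite -Em eqxx in Sm].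
Qed.

Lemma two_row_fort_rows F m : fort (@H_adj k) F -> two_row_fort (row F m ++ row F (ordS m)).
Proof.
rewrite fort_rowsE => /andP[_ /forallP fortF].
apply/hasP; exists (prev_link F m); first by case: (prev_link F m).
apply/hasP; exists (next_link F (ordS m)); first by case: (next_link F _).
rewrite take_size_cat ?drop_size_cat ?size_row //.
rewrite nth_cat size_row /= (nth_row F (ordS m) o0).
rewrite nth_cat size_row /= (nth_row F m o2).
have -> : ((m, o2) \in F) = prev_link F (ordS m) by rewrite /prev_link ordSK.
by rewrite -[(ordS m, o0) \in F]/(next_link F m) !fortF.
Qed.

Lemma ZIr_two_rows S m : ZIr_set (@H_adj k) S ->
  count id (row S m) + count id (row S (ordS m)) <= 4.
Proof.
move=> ZIr_S; rewrite leqNgt -count_cat; apply/negP => dense.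
have size_rows F : size (row F m ++ row F (ordS m)) = 10 by rewrite size_cat !size_row.
have [x Sx unprivate_x] := dense_two_rows_no_private_fort (size_rows S) dense.
have x10 : x < 10.
  by rewrite -(size_rows S); apply: contraTT Sx; rewrite -leqNgt => /(nth_default false) ->.
rewrite nth_two_rows // in Sx.
have /existsP[F /andP[fortF /eqP SF]] := forall_inP ZIr_S _ Sx.
have Fx : two_row_vertex m x \in F.
  by have := set11 (two_row_vertex m x); rewrite -SF inE => /andP[].
have [|y /and4P[y10 yx Fy Sy]] := unprivate_x _ (size_rows F) (two_row_fort_rows m fortF).
  by rewrite nth_two_rows.
rewrite nth_two_rows // in Fy; rewrite nth_two_rows // in Sy.
have : two_row_vertex m y \in S :&: F by rewrite inE Sy Fy.
by rewrite SF inE => /eqP/two_row_vertex_inj => /(_ y10 x10) eq_yx; rewrite eq_yx eqxx in yx.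
Qed.

Lemma card_ZIr_set S : ZIr_set (@H_adj k) S -> #|S| <= 2 * k.
Proof.
move=> ZIr_S; rewrite -(leq_pmul2l (isT : 0 < 2)) mulnA.
have -> : 2 * #|S| = \sum_m (count id (row S m) + count id (row S (ordS m))).
  have shift : \sum_m count id (row S (ordS m)) = \sum_m count id (row S m).
    by rewrite [RHS](reindex_inj (@ordS_inj k)).
  by rewrite big_split /= shift -card_rows addnn mul2n.
have -> : 2 * 2 * k = \sum_(m < k) 4 by rewrite sum_nat_const card_ord mulnC.
by apply: leq_sum => m _; apply: ZIr_two_rows.
Qed.

Definition ZIr_witness : {set V} := rows_set (fun _ => word_13).

Definition witness_private_fort i (j : 'I_5) : {set V} :=
  rows_set (fun m => if m == i then (if j == o1 then word_124 else word_023) else word_024).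

Lemma fort_witness_private_fort i j : fort (@H_adj k) (witness_private_fort i j).
Proof.
rewrite fort_rowsE; apply/andP; split.
  by apply/set0Pn; exists (i, o2); rewrite inE eqxx; case: (j == o1).
apply/forallP => m; rewrite row_rows_set ?prev_link_rows_set ?next_link_rows_set;
  last by case: (m == i); case: (j == o1).
case: (m == i); first case: (j == o1).
all: by case: (nth false _ 2); case: (nth false _ 0).
Qed.

Lemma ZIr_set_witness : ZIr_set (@H_adj k) ZIr_witness.
Proof.
apply/forall_inP => -[i j] Sij; apply/existsP; exists (witness_private_fort i j).
rewrite /private_fort fort_witness_private_fort /=; apply/eqP/setP => -[m j'].
rewrite !inE /= xpair_eqE; move: Sij; rewrite inE /=.
case: (m == i) => /=; first case: j => [[|[|[|[|[|]]]]] ?] //= _.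
all: by case: j' => [[|[|[|[|[|]]]]] ?].
Qed.

Lemma card_ZIr_witness : #|ZIr_witness| = 2 * k.
Proof. by rewrite card_rows_set // sum_nat_const card_ord mulnC. Qed.

Lemma ZIR_H : ZIR (@H_adj k) = 2 * k.
Proof.
apply/eqP; rewrite eqn_leq; apply/andP; split.
  by apply/bigmax_leqP => S /maxsetp; apply: card_ZIr_set.
rewrite -card_ZIr_witness; apply: leq_bigmax_cond; apply/maxsetP; split.
  exact: ZIr_set_witness.
move=> S ZIr_S sub_S; apply/eqP; rewrite eq_sym eqEcard sub_S card_ZIr_witness.
exact: card_ZIr_set.
Qed.

Definition set_134 i : {set V} :=
  rows_set (fun m => if m == i then word_134 else nseq 5 false).

Lemma fort_set_134 i : fort (@H_adj k) (set_134 i).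
Proof.
rewrite fort_rowsE; apply/andP; split; first by apply/set0Pn; exists (i, o1); rewrite inE eqxx.
apply/forallP => m; rewrite row_rows_set ?prev_link_rows_set ?next_link_rows_set;
  last by case: (m == i).
by case: (m == i); case: (ord_pred m == i); case: (ordS m == i).
Qed.

Lemma set_134_disjoint S i : ~~ meets_134 (row S i) -> S :&: set_134 i = set0.
Proof.
move=> miss; apply/setP => -[m j]; rewrite !inE /=; case: eqP => [->|_]; last first.
  by apply/andP => -[_]; case: j => [[|[|[|[|[|]]]]] ?].
rewrite -nth_row; apply/andP => -[Sij].
by case: j Sij => [[|[|[|[|[|]]]]] ?] //= Sij; rewrite /meets_134 Sij ?orbT in miss.
Qed.

Section CoverFort.
Variable S : {set V}.
Hypothesis meets_S : forall m, meets_134 (row S m).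
Hypothesis counts_S : forall m, count id (row S m) = 1 \/
  [/\ count id (row S m) = 2, count id (row S (ord_pred m)) = 1
    & count id (row S (ordS m)) = 1].

(* A row with one vertex of S gets its complement, which contains positions 0
   and 2, so a row with two vertices of S sees both of its links. *)
Definition cover_word m :=
  if count id (row S m) == 1 then map negb (row S m) else pair_fort_word (row S m).
Definition cover_fort : {set V} := rows_set cover_word.

Lemma cover_word_single m : count id (row S m) = 1 ->
  [/\ nth false (cover_word m) 0, nth false (cover_word m) 2
    & forall prev next, row_fort (cover_word m) prev next].
Proof.
by move=> c1; rewrite /cover_word c1 eqxx; apply: complement_row_fort; rewrite ?size_row.
Qed.

Lemma cover_word_pair m : count id (row S m) = 2 -> avoiding_fort_word (row S m) (cover_word m).
Proof. by move=> c2; rewrite /cover_word c2 pair_fort_wordP ?size_row ?meets_S. Qed.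

Lemma size_cover_word m : size (cover_word m) = 5.
Proof.
case: (counts_S m) => [c1 | [c2 _ _]]; first by rewrite /cover_word c1 size_map size_row.
by case/and4P: (cover_word_pair c2) => /eqP.
Qed.

Lemma fort_cover_fort : fort (@H_adj k) cover_fort.
Proof.
rewrite fort_rowsE; apply/andP; split.
  pose m0 : 'I_k := Ordinal (ltnW k_gt1).
  case: (counts_S m0) => [c1 | [c2 _ _]].
    have [w0 _ _] := cover_word_single c1.
    by apply/set0Pn; exists (m0, o0); rewrite inE; exact: w0.
  case/and4P: (cover_word_pair c2) => /eqP size_p /(has_nthP false)[j lt_j5 p_j] _ _.
  by rewrite size_p in lt_j5; apply/set0Pn; exists (m0, Ordinal lt_j5); rewrite inE; exact: p_j.
apply/forallP => m; rewrite row_rows_set ?size_cover_word // prev_link_rows_set next_link_rows_set.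
case: (counts_S m) => [c1 | [c2 c_prev c_next]].
  by have [_ _] := cover_word_single c1; apply.
have [_ prev2 _] := cover_word_single c_prev; have [next0 _ _] := cover_word_single c_next.
case/and4P: (cover_word_pair c2) => _ _ _ fort_tt.
by rewrite [X in row_fort _ X _]prev2 [X in row_fort _ _ X]next0.
Qed.

Lemma cover_fort_disjoint : S :&: cover_fort = set0.
Proof.
apply/setP => -[m j]; rewrite !inE /= -nth_row.
case: (counts_S m) => [c1 | [c2 _ _]].
  by rewrite /cover_word c1 eqxx (nth_map false) ?size_row // andbN.
case/and4P: (cover_word_pair c2) => _ _ /hasPn/(_ j) disj _.
by rewrite andbC; apply/negbTE/disj; rewrite mem_iota ltn_ord.
Qed.
End CoverFort.

Lemma ord_pred_neq m : ord_pred m != m.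
Proof. by rewrite -(inj_eq (@ordS_inj k)) ord_predK eq_sym ordS_neq. Qed.

Lemma small_cover_counts S : #|S| <= k.+1 -> (forall m, meets_134 (row S m)) ->
  forall m, count id (row S m) = 1 \/
    [/\ count id (row S m) = 2, count id (row S (ord_pred m)) = 1
      & count id (row S (ordS m)) = 1].
Proof.
move=> small_S meets_S.
have pos m : 0 < count id (row S m).
  rewrite -has_count; apply/(has_nthP false).
  by case/or3P: (meets_S m) => ?; [exists 1 | exists 3 | exists 4]; rewrite ?size_row.
have pair m m' : m != m' -> count id (row S m) + count id (row S m') <= 3.
  apply: (pair_le3_of_small_sum (c := fun m => count id (row S m))) => //.
  by rewrite -card_rows card_ord.
move=> m; have succ := pair _ _ (ordS_neq m); have pred := pair _ _ (ord_pred_neq m).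
have pos_m := pos m; have pos_pred := pos (ord_pred m); have pos_succ := pos (ordS m).
have [c1|c2] : count id (row S m) = 1 \/ count id (row S m) = 2 by lia.
  by left.
by right; split=> //; lia.
Qed.

Lemma fort_avoiding_small_set S : #|S| <= k.+1 -> exists2 F, fort (@H_adj k) F & S :&: F = set0.
Proof.
move=> small_S; case: (boolP [forall m, meets_134 (row S m)]) => [/forallP meets_S | ].
  have counts_S := small_cover_counts small_S meets_S.
  exists (cover_fort S); [exact: fort_cover_fort | exact: cover_fort_disjoint].
by case/forallPn=> i miss; exists (set_134 i); [exact: fort_set_134 | exact: set_134_disjoint].
Qed.

Lemma Zf_H_ge : k + 2 <= Zf (@H_adj k).
Proof.
apply: geq_bigmin => [|S zf_S]; first by rewrite card_H_vertex; lia.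
rewrite leqNgt addn2 ltnS; apply/negP => small_S.
have [F fort_F SF0] := fort_avoiding_small_set small_S.
by have := zero_forcing_set_meets_fort zf_S fort_F; rewrite SF0 eqxx.
Qed.
End AtLeastTwoRows.

Section ZeroForcingUpper.
Variable k : nat.
Notation V := (H_vertex k).
Implicit Types (B : {set V}) (i : 'I_k).

Lemma force_step_H B (u w : V) : u \in B -> w \notin B -> w \in H_nbrs u ->
  count (mem (~: B)) (H_nbrs u) = 1 -> force_step (@H_adj k) B (w |: B).
Proof.
by move=> Bu Bw uw count1; apply: (force_step_card1 Bu); rewrite ?H_adjE ?card_nbhdI_H.
Qed.

Definition forced_word (m : nat) i :=
  if i < m then word_full else if i == 0 :> nat then word_014 else word_1.
Definition forced_rows m : {set V} := rows_set (forced_word m).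

Lemma size_forced_word m i : size (forced_word m i) = 5.
Proof. by rewrite /forced_word; case: ifP => //; case: ifP. Qed.

Lemma forced_rows_k : forced_rows k = [set: V].
Proof.
by apply/setP => -[i j]; rewrite !inE /= /forced_word ltn_ord; case: j => [[|[|[|[|[|]]]]] ?].
Qed.

Lemma card_forced_rows0 (k_gt0 : 0 < k) : #|(forced_rows 0 : {set V})| = k + 2.
Proof.
rewrite card_rows_set; last exact: size_forced_word.
rewrite (bigD1 (Ordinal k_gt0)) //= (eq_bigr (fun _ => 1)) => [|i]; last first.
  by rewrite -(inj_eq val_inj) /forced_word /= => /negbTE ->.
by rewrite sum1_card cardC1 card_ord /forced_word /=; lia.
Qed.

Lemma force_first_row (k_gt0 : 0 < k) :
  connect (force_step (@H_adj k)) (forced_rows 0) (forced_rows 1).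
Proof.
set i := Ordinal k_gt0.
have W_i : forced_word 0 i = word_014 by [].
have W'_x x : x != i -> forced_word 1 x = forced_word 0 x.
  by rewrite -(inj_eq val_inj) /forced_word /=; case: (val x).
set B0 := forced_rows 0; set B1 := (i, o3) |: B0.
have step1 : force_step (@H_adj k) B0 B1.
  by apply: (@force_step_H _ (i, o4)); rewrite /= !inE /= ?W_i.
have step2 : force_step (@H_adj k) B1 ((i, o2) |: B1).
  by apply: (@force_step_H _ (i, o3)); rewrite /= !inE /= ?xpair_eqE ?eqxx /= ?W_i.
have -> : forced_rows 1 = (i, o2) |: B1.
  apply/setP => -[x j]; rewrite !inE /= !xpair_eqE.
  have [->|x_i] := eqVneq x i; last by rewrite W'_x.
  by rewrite W_i; case: j => [[|[|[|[|[|]]]]] ?].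
exact: connect_trans (connect1 step1) (connect1 step2).
Qed.

Lemma force_next_row i : 0 < i ->
  connect (force_step (@H_adj k)) (forced_rows i) (forced_rows i.+1).
Proof.
move=> i_gt0; set ip := ord_pred i.
have Sip : ordS ip = i by rewrite ord_predK.
have ip_val : ip = i.-1 :> nat by rewrite val_ord_pred.
have ip_i : (ip == i) = false.
  by apply/eqP => eq_ip; move: ip_val; rewrite eq_ip; lia.
have W_ip : forced_word i ip = word_full by rewrite /forced_word ip_val ltn_predL i_gt0.
have W_i : forced_word i i = word_1 by rewrite /forced_word ltnn eqn0Ngt i_gt0.
have W'_i : forced_word i.+1 i = word_full by rewrite /forced_word ltnSn.
have W'_x x : x != i -> forced_word i.+1 x = forced_word i x.
  by rewrite -(inj_eq val_inj) /forced_word ltnS leq_eqVlt => /negbTE ->.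
set B0 := forced_rows i; set B1 := (i, o0) |: B0.
set B2 := (i, o4) |: B1; set B3 := (i, o3) |: B2.
have step1 : force_step (@H_adj k) B0 B1.
  by apply: (@force_step_H _ (ip, o2)); rewrite /= !inE /= ?Sip ?W_ip ?W_i ?eqxx ?orbT.
have step2 : force_step (@H_adj k) B1 B2.
  apply: (@force_step_H _ (i, o0));
    by rewrite /= !inE /= ?xpair_eqE ?eqxx /= -/ip ?ip_i ?W_ip ?W_i.
have step3 : force_step (@H_adj k) B2 B3.
  by apply: (@force_step_H _ (i, o4)); rewrite /= !inE /= ?xpair_eqE ?eqxx /= ?W_i.
have step4 : force_step (@H_adj k) B3 ((i, o2) |: B3).
  by apply: (@force_step_H _ (i, o3)); rewrite /= !inE /= ?xpair_eqE ?eqxx /= ?W_i.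
have -> : forced_rows i.+1 = (i, o2) |: B3 :> {set V}.
  apply/setP => -[x j]; rewrite !inE /= !xpair_eqE.
  have [->|x_i] := eqVneq x i; last by rewrite W'_x.
  by rewrite W'_i W_i; case: j => [[|[|[|[|[|]]]]] ?].
apply: connect_trans (connect1 step1) _; apply: connect_trans (connect1 step2) _.
exact: connect_trans (connect1 step3) (connect1 step4).
Qed.

Lemma connect_forced_rows m : 0 < m <= k ->
  connect (force_step (@H_adj k)) (forced_rows 0) (forced_rows m).
Proof.
elim: m => [//|[|m] IHm] /andP[_ le_mk]; first exact: force_first_row.
have lt_mk : m.+1 < k by [].
apply: connect_trans (IHm _) (force_next_row (i := Ordinal lt_mk) _) => //.
exact: ltnW.
Qed.

Lemma Zf_H_le : 0 < k -> Zf (@H_adj k) <= k + 2.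
Proof.
move=> k_gt0; rewrite -(card_forced_rows0 k_gt0); apply: bigmin_leq.
by rewrite /zero_forcing_set -forced_rows_k; apply: connect_forced_rows; rewrite k_gt0 leqnn.
Qed.
End ZeroForcingUpper.

Theorem theorem4p8 (k : nat) (hk : 2 <= k) :
  let n := #|{: H_vertex k}| in
  n = 5 * k /\
  min_degree (@H_adj k) = 2 /\
  5 * gamma2 (@H_adj k) = 3 * n /\
  5 * ZIR (@H_adj k) = 2 * n /\
  ZIR (@H_adj k) = n - gamma2 (@H_adj k) /\
  Zf (@H_adj k) = k + 2.
Proof.
have k_gt0 : 0 < k := ltnW hk.
have Zf_eq : Zf (@H_adj k) = k + 2 by apply/eqP; rewrite eqn_leq Zf_H_le // Zf_H_ge.
rewrite /= card_H_vertex min_degree_H // gamma2_H ZIR_H // Zf_eq.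
by do !split; lia.
Qed.
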